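(* Let $f(z)=z+\sum_{k=2}^\infty b_kz^k\in\mathscr{S}^*_\wp$ and $\alpha=(1+e)^2$. Then $\sum_{k=2}^\infty (k^2-\alpha)|b_k|^2\le\alpha-1$. Consequently, if $f(z)=z+\sum_{k\ge4}b_kz^k\in\mathscr{S}^*_\wp$, then $|b_k|\le\sqrt{(\alpha-1)/(k^2-\alpha)}$ for all $k\ge4$.
   Context: $\mathbb{D}$ is the unit disk; $\mathcal{A}$ is the class of analytic $f$ on $\mathbb{D}$ with $f(0)=0,f'(0)=1$. $f\prec g$ means $f=g\circ\omega$ for analytic $\omega:\mathbb{D}\to\mathbb{D}$, $\omega(0)=0$. $\wp(z)=1+ze^z$, $\mathscr{S}^*_\wp=\{f\in\mathcal{A}:zf'(z)/f(z)\prec\wp(z)\}$. *)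

From Stdlib Require Import Reals.
From Coquelicot Require Import Coquelicot.
Open Scope R_scope.

Definition inD (z : C) : Prop := Cmod z < 1.

Definition Cexp (z : C) : C :=
  (exp (fst z) * cos (snd z), exp (fst z) * sin (snd z)).

Definition analytic_on_D (g : C -> C) : Prop :=
  forall z, inD z -> @ex_derive C_AbsRing C_NormedModule g z.

Definition subordinate (F G : C -> C) : Prop :=
  exists w : C -> C, analytic_on_D w /\ w 0%C = 0%C /\
    (forall z, inD z -> inD (w z)) /\
    (forall z, inD z -> F z = G (w z)).

Definition wp (z : C) : C := (1 + z * Cexp z)%C.

Definition classA (f : C -> C) : Prop :=
  analytic_on_D f /\ f 0%C = 0%C /\
  @is_derive C_AbsRing C_NormedModule f (0%C : C) (1%C : C).

(* S*_℘ : f ∈ A, f(z) ≠ 0 on D\{0} (so that z f'(z)/f(z) is defined there,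
   with its removable value 1 at z = 0), and z f'(z)/f(z) ≺ ℘(z). *)
Definition Sstar_wp (f : C -> C) : Prop :=
  classA f /\
  (forall z, inD z -> z <> 0%C -> f z <> 0%C) /\
  exists f' : C -> C,
    (forall z, inD z -> @is_derive C_AbsRing C_NormedModule f z (f' z)) /\
    subordinate (fun z => if Ceq_dec z 0%C then 1%C else (z * f' z / f z)%C) wp.

Definition alpha : R := (1 + exp 1) ^ 2.

(* For f ∈ S*_℘ we have z f'(z) = ℘(ω(z)) f(z) with
   |ω(z)| < 1, and |℘(u)| ≤ 1 + e on the unit disk, so |z f'(z)| ≤ (1+e)|f(z)|
   on every circle |z| = r < 1.  Averaging the squares of both sides over the
   circle (Parseval) gives Σ n² |b_n|² r^(2n) ≤ α Σ |b_n|² r^(2n) with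
   α = (1+e)², i.e. Σ_{n≥2} (n² - α)|b_n|² r^(2n) ≤ (α - 1) r², because b_0 = 0
   and b_1 = 1.  Letting r → 1 gives the first claim; the second follows since
   every term with n ≥ 4 is nonnegative (α < 16).

   Parseval is used in its discrete form: averaging |p|² over the
   K points r·e^(2πij/K) is exact for polynomials p of degree < K.  The series
   f and z f' are compared with their degree-K truncations, with explicit
   errors of order s^K (s < 1) coming from the geometric decay of b_n t^n. *)

From Stdlib Require Import Reals.
From Coquelicot Require Import Coquelicot.
From Stdlib Require Import Lra Lia Psatz.
Open Scope R_scope.

Fixpoint rsum (n : nat) (f : nat -> R) : R :=
  match n with O => 0 | S k => rsum k f + f k end.
Fixpoint csum (n : nat) (f : nat -> C) : C :=
  match n with O => 0%C | S k => (csum k f + f k)%C end.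

Lemma rsum_ext n f g : (forall i, (i < n)%nat -> f i = g i) -> rsum n f = rsum n g.
Proof. induction n; simpl; intros H; auto. rewrite IHn; [rewrite H|]; auto. Qed.

Lemma rsum_le n f g : (forall i, (i < n)%nat -> f i <= g i) -> rsum n f <= rsum n g.
Proof.
  induction n; simpl; intros H; [lra|].
  specialize (IHn (fun i Hi => H i ltac:(lia))). specialize (H n ltac:(lia)). lra.
Qed.

Lemma rsum_plus n f g : rsum n (fun i => f i + g i) = rsum n f + rsum n g.
Proof. induction n; simpl; [lra|]. rewrite IHn; ring. Qed.

Lemma rsum_scal n c f : rsum n (fun i => c * f i) = c * rsum n f.
Proof. induction n; simpl; [ring|]. rewrite IHn; ring. Qed.

Lemma rsum_const n c : rsum n (fun _ => c) = INR n * c.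
Proof. induction n; simpl rsum. simpl; ring. rewrite IHn, S_INR; ring. Qed.

Lemma rsum_zero n : rsum n (fun _ => 0) = 0.
Proof. rewrite rsum_const; ring. Qed.

Lemma rsum_nonneg n f : (forall i, (i < n)%nat -> 0 <= f i) -> 0 <= rsum n f.
Proof. intros H. rewrite <- (rsum_zero n). apply rsum_le; auto. Qed.

Lemma rsum_term_le n f k :
  (forall i, (i < n)%nat -> 0 <= f i) -> (k < n)%nat -> f k <= rsum n f.
Proof.
  induction n; intros H Hk; [lia|]. simpl. destruct (Nat.eq_dec k n).
  - subst. assert (0 <= rsum n f) by (apply rsum_nonneg; intros; apply H; lia). lra.
  - assert (f k <= rsum n f) by (apply IHn; [intros; apply H|]; lia).
    specialize (H n ltac:(lia)); lra.
Qed.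

Lemma rsum_split n m f : rsum (n + m) f = rsum n f + rsum m (fun k => f (n + k)%nat).
Proof.
  induction m; simpl. rewrite Nat.add_0_r; ring.
  rewrite Nat.add_succ_r; simpl. rewrite IHm; ring.
Qed.

Lemma rsum_swap n m (f : nat -> nat -> R) :
  rsum n (fun i => rsum m (fun j => f i j)) = rsum m (fun j => rsum n (fun i => f i j)).
Proof. induction n; simpl. now rewrite rsum_zero. rewrite IHn, <- rsum_plus. reflexivity. Qed.

Lemma rsum_mul n f g : rsum n f * rsum n g = rsum n (fun i => rsum n (fun j => f i * g j)).
Proof.
  rewrite Rmult_comm, <- rsum_scal. apply rsum_ext; intros i _.
  rewrite Rmult_comm, <- rsum_scal. reflexivity.
Qed.

Lemma rsum_delta n k X : (k < n)%nat ->
  rsum n (fun m => if Nat.eq_dec k m then X else 0) = X.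
Proof.
  induction n; intros H; [lia|]. simpl. destruct (Nat.eq_dec k n).
  - subst. rewrite (rsum_ext _ _ (fun _ => 0)), rsum_zero; [ring|].
    intros i Hi. destruct (Nat.eq_dec n i); [lia|auto].
  - rewrite IHn; [ring|lia].
Qed.

Lemma rsum_telescope n (g : nat -> R) : rsum n (fun j => g (S j) - g j) = g n - g O.
Proof. induction n; simpl. ring. rewrite IHn. ring. Qed.

Lemma csum_fst n f : fst (csum n f) = rsum n (fun i => fst (f i)).
Proof. induction n; simpl; auto. rewrite IHn; reflexivity. Qed.

Lemma csum_snd n f : snd (csum n f) = rsum n (fun i => snd (f i)).
Proof. induction n; simpl; auto. rewrite IHn; reflexivity. Qed.

Lemma csum_ext n f g : (forall i, (i < n)%nat -> f i = g i) -> csum n f = csum n g.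
Proof. induction n; simpl; intros H; auto. rewrite IHn; [rewrite H|]; auto. Qed.

Lemma Cmod_csum n f : Cmod (csum n f) <= rsum n (fun i => Cmod (f i)).
Proof.
  induction n; simpl. rewrite Cmod_0; lra.
  eapply Rle_trans; [apply Cmod_triangle|]. lra.
Qed.

Lemma csum_split n m f : csum (n + m) f = (csum n f + csum m (fun k => f (n + k)%nat))%C.
Proof.
  induction m; simpl. rewrite Nat.add_0_r; ring.
  rewrite Nat.add_succ_r; simpl. rewrite IHm; ring.
Qed.

Lemma csum_minus n f g : (csum n f - csum n g)%C = csum n (fun i => f i - g i)%C.
Proof. induction n; simpl. ring. rewrite <- IHn; ring. Qed.

Lemma csum_scal n c f : (c * csum n f)%C = csum n (fun i => c * f i)%C.
Proof. induction n; simpl. ring. rewrite <- IHn; ring. Qed.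

(* Coquelicot's partial sums [sum_n a M] have M + 1 terms. *)
Lemma sum_n_csum (a : nat -> C) M : @sum_n C_AbelianMonoid a M = csum (S M) a.
Proof.
  induction M. rewrite sum_O; simpl; ring_simplify; reflexivity.
  unfold sum_n in *. rewrite sum_n_Sm by lia. rewrite IHM. reflexivity.
Qed.

Lemma sum_n_rsum (a : nat -> R) M : sum_n a M = rsum (S M) a.
Proof.
  induction M. rewrite sum_O; simpl; ring.
  unfold sum_n in *. rewrite sum_n_Sm by lia. rewrite IHM. reflexivity.
Qed.

Lemma pow_antitone s m n : 0 <= s <= 1 -> (m <= n)%nat -> s ^ n <= s ^ m.
Proof.
  intros Hs Hmn. replace n with (m + (n - m))%nat by lia. rewrite pow_add.
  assert (s ^ (n - m) <= 1) by (rewrite <- (pow1 (n - m)); apply pow_incr; lra).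
  assert (0 <= s ^ m) by (apply pow_le; lra). nra.
Qed.

Lemma pow_le_one s n : 0 <= s <= 1 -> s ^ n <= 1.
Proof. intros Hs. apply (pow_antitone s 0 n Hs). lia. Qed.

Lemma geom_sum_le n s : 0 <= s < 1 -> rsum n (fun k => s ^ k) <= / (1 - s).
Proof.
  intros Hs.
  assert (E : rsum n (fun k => s ^ k) * (1 - s) = 1 - s ^ n).
  { induction n; simpl. ring. rewrite Rmult_plus_distr_r, IHn. ring. }
  assert (0 <= s ^ n) by (apply pow_le; lra).
  apply (Rmult_le_reg_r (1 - s)); [lra|]. rewrite Rinv_l by lra. lra.
Qed.

(* n s^n ≤ 1 + s + ... + s^(n-1) ≤ 1/(1 - s): the bound behind the tail of Σ n b_n z^(n-1). *)
Lemma n_pow_le k s : 0 <= s < 1 -> INR k * s ^ k <= / (1 - s).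
Proof.
  intros Hs. eapply Rle_trans; [|apply (geom_sum_le k)]; auto.
  assert (H : forall m, (m <= k)%nat -> INR m * s ^ k <= rsum m (fun i => s ^ i)).
  { induction m; intros Hm. simpl; lra. rewrite S_INR. simpl.
    assert (s ^ k <= s ^ m) by (apply pow_antitone; [lra|lia]).
    specialize (IHm ltac:(lia)). lra. }
  apply H; lia.
Qed.

Lemma one_sub_pow_le r m : 0 <= r <= 1 -> 1 - r ^ m <= INR m * (1 - r).
Proof.
  intros Hr. induction m. simpl; lra.
  rewrite S_INR. simpl. pose proof (pow_le_one r m Hr).
  assert (0 <= r ^ m) by (apply pow_le; lra). nra.
Qed.

Lemma geometric_small s Q e : 0 < s < 1 -> 0 <= Q -> 0 < e ->
  forall L, exists K, (L <= K)%nat /\ Q * s ^ K <= e.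
Proof.
  intros Hs HQ He L.
  destruct (pow_lt_1_zero s ltac:(rewrite Rabs_pos_eq; lra) (e / (Q + 1))
              ltac:(apply Rdiv_lt_0_compat; lra)) as [N HN].
  exists (max N L). split; [lia|]. specialize (HN (max N L) ltac:(lia)).
  rewrite Rabs_pos_eq in HN by (apply pow_le; lra).
  apply Rle_trans with (Q * (e / (Q + 1))). apply Rmult_le_compat_l; lra.
  apply (Rmult_le_reg_r (Q + 1)); [lra|]. unfold Rdiv.
  rewrite Rmult_assoc, Rmult_assoc, Rinv_l by lra. nra.
Qed.

Lemma small_step delta a A e : 0 < delta -> 0 < a -> 0 <= A -> 0 < e ->
  exists h, 0 < h < delta /\ h <= a /\ h * A <= e.
Proof.
  intros Hd Ha HA He. exists (Rmin (delta / 2) (Rmin a (e / (A + 1)))).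
  pose proof (Rmin_l (delta / 2) (Rmin a (e / (A + 1)))) as H1.
  pose proof (Rmin_r (delta / 2) (Rmin a (e / (A + 1)))) as H2.
  pose proof (Rmin_l a (e / (A + 1))). pose proof (Rmin_r a (e / (A + 1))).
  set (h := Rmin (delta / 2) (Rmin a (e / (A + 1)))) in *.
  assert (0 < h).
  { unfold h. apply Rmin_glb_lt; [lra|]. apply Rmin_glb_lt; [lra|]. apply Rdiv_lt_0_compat; lra. }
  repeat split; try lra.
  apply Rle_trans with (e / (A + 1) * A). apply Rmult_le_compat_r; lra.
  apply (Rmult_le_reg_l (A + 1)); [lra|]. unfold Rdiv.
  replace ((A + 1) * (e * / (A + 1) * A)) with (e * A) by (field; lra). nra.
Qed.

Lemma perturbed_square_le c d x S g :
  0 <= c -> 0 <= d -> 0 <= x <= S -> 0 <= g <= c * x + d ->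
  g ^ 2 <= c ^ 2 * x ^ 2 + (2 * c * d * S + d ^ 2).
Proof.
  intros Hc Hd Hx Hg.
  assert (g ^ 2 <= (c * x + d) ^ 2) by (apply pow_incr; lra).
  assert (c * d * x <= c * d * S) by (apply Rmult_le_compat_l; nra).
  nra.
Qed.

Lemma is_series_Cmod (a : nat -> C) (l : C) (e : R) : 0 < e ->
  @is_series C_AbsRing C_NormedModule a l ->
  exists N, forall M, (N <= M)%nat -> Cmod (csum (S M) a - l) < e.
Proof.
  intros He Hs.
  assert (Hs2 : 0 < sqrt 2) by (apply sqrt_lt_R0; lra).
  assert (He' : 0 < e / sqrt 2) by (apply Rdiv_lt_0_compat; lra).
  destruct (proj1 (filterlim_locally _ _) Hs (mkposreal _ He')) as [N HN].
  exists N. intros M HM. specialize (HN M HM).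
  apply C_NormedModule_mixin_compat2 in HN. simpl in HN.
  replace (sqrt 2 * (e / sqrt 2)) with e in HN by (field; lra).
  rewrite <- sum_n_csum. exact HN.
Qed.

Lemma series_limit_near (a : nat -> C) (l c : C) (E : R) (M0 : nat) :
  @is_series C_AbsRing C_NormedModule a l ->
  (forall M, (M0 <= M)%nat -> Cmod (csum (S M) a - c) <= E) ->
  Cmod (l - c) <= E.
Proof.
  intros Hs HM. destruct (Rle_or_lt (Cmod (l - c)) E) as [H|H]; auto. exfalso.
  destruct (is_series_Cmod a l (Cmod (l - c) - E) ltac:(lra) Hs) as [N HN].
  specialize (HN (max N M0) ltac:(lia)). specialize (HM (max N M0) ltac:(lia)).
  set (P := csum (S (max N M0)) a) in *.
  assert (Cmod (l - c) <= Cmod (P - l) + Cmod (P - c)).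
  { replace (l - c)%C with (- (P - l) + (P - c))%C by ring.
    eapply Rle_trans; [apply Cmod_triangle|]. rewrite Cmod_opp. lra. }
  lra.
Qed.

Lemma series_terms_bounded (a : nat -> C) (l : C) :
  @is_series C_AbsRing C_NormedModule a l -> exists B, 0 <= B /\ forall n, Cmod (a n) <= B.
Proof.
  intros Hs. destruct (is_series_Cmod a l 1 ltac:(lra) Hs) as [N HN].
  set (B0 := rsum (S N) (fun i => Cmod (a i))).
  assert (HB0 : 0 <= B0) by (apply rsum_nonneg; intros; apply Cmod_ge_0).
  exists (B0 + 2). split; [lra|]. intros n.
  destruct (Nat.le_gt_cases n N) as [Hn|Hn].
  - assert (Cmod (a n) <= B0).
    { apply (rsum_term_le (S N) (fun i => Cmod (a i))); [intros; apply Cmod_ge_0|lia]. }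
    lra.
  - destruct n as [|n]; [lia|].
    replace (a (S n)) with ((csum (S (S n)) a - l) - (csum (S n) a - l))%C by (simpl; ring).
    eapply Rle_trans; [apply Cmod_triangle|]. rewrite Cmod_opp.
    pose proof (HN (S n) ltac:(lia)). pose proof (HN n ltac:(lia)). lra.
Qed.

(* A finite sum is the limit of its "radial" versions Σ g_k r^(p_k) as r → 1⁻, so
   a bound on the latter for all r < 1 passes to the sum itself.  By
   [one_sub_pow_le] the two differ by at most (1 - r) Σ |g_k| p_k. *)
Lemma finite_sum_radial_limit N (g : nat -> R) (p : nat -> nat) M :
  (forall r, 0 < r < 1 -> rsum N (fun k => g k * r ^ p k) <= M) -> rsum N g <= M.
Proof.
  intros Hr. set (W := rsum N (fun k => Rabs (g k) * INR (p k))).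
  assert (HW : 0 <= W).
  { apply rsum_nonneg; intros. apply Rmult_le_pos; [apply Rabs_pos|apply pos_INR]. }
  assert (Hgap : forall r, 0 <= r <= 1 ->
                 rsum N g - rsum N (fun k => g k * r ^ p k) <= (1 - r) * W).
  { intros r Hr1. unfold W. rewrite <- rsum_scal.
    replace (rsum N g - rsum N (fun k => g k * r ^ p k))
      with (rsum N (fun k => g k * (1 - r ^ p k))).
    2:{ rewrite (rsum_ext _ (fun k => g k * (1 - r ^ p k)) (fun k => g k + (-1) * (g k * r ^ p k)))
          by (intros; ring).
        rewrite rsum_plus, rsum_scal. ring. }
    apply rsum_le; intros i _.
    pose proof (one_sub_pow_le r (p i) Hr1). pose proof (pow_le_one r (p i) Hr1).
    apply Rle_trans with (Rabs (g i) * (1 - r ^ p i)).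
    - apply Rmult_le_compat_r; [lra|apply Rle_abs].
    - replace ((1 - r) * (Rabs (g i) * INR (p i))) with (Rabs (g i) * (INR (p i) * (1 - r)))
        by ring.
      apply Rmult_le_compat_l; [apply Rabs_pos|auto]. }
  apply Rle_plus_epsilon; intros e He.
  destruct (small_step 1 1 W e ltac:(lra) ltac:(lra) HW He) as [d [Hd [_ HdW]]].
  specialize (Hr (1 - d) ltac:(lra)). specialize (Hgap (1 - d) ltac:(lra)).
  replace (1 - (1 - d)) with d in Hgap by ring. lra.
Qed.

Lemma series_eventually_nonneg_bounded (u : nat -> R) (N0 : nat) (M : R) :
  (forall k, 0 <= u (N0 + k)%nat) -> (forall N, (N0 <= N)%nat -> rsum N u <= M) ->
  ex_series u /\ Series u <= M.
Proof.
  intros Hpos Hbound.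
  assert (Hex : ex_series u).
  { apply (ex_series_incr_n u N0).
    destruct (ex_finite_lim_seq_incr (sum_n (fun k => u (N0 + k)%nat)) (M - rsum N0 u)) as [l Hl].
    - intros n. rewrite !sum_n_rsum. cbn [rsum]. pose proof (Hpos (S n)). lra.
    - intros N. pose proof (Hbound (N0 + S N)%nat ltac:(lia)) as P. rewrite rsum_split in P.
      rewrite sum_n_rsum. lra.
    - exists l. exact Hl. }
  split; auto.
  apply (is_lim_seq_le_loc (sum_n u) (fun _ => M) (Series u) M);
    [| apply Series_correct; auto | apply is_lim_seq_const].
  exists N0. intros N HN. rewrite sum_n_rsum. apply Hbound. lia.
Qed.

Definition ptrunc (K : nat) (b : nat -> C) (z : C) : C := csum K (fun n => Cpow z n * b n)%C.
Definition dpow (z : C) (n : nat) : C := (RtoC (INR n) * Cpow z (pred n))%C.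
Definition dtrunc (K : nat) (b : nat -> C) (z : C) : C := csum K (fun n => dpow z n * b n)%C.

Lemma pow_n_Cpow (z : C) n : @pow_n C_Ring z n = Cpow z n.
Proof. induction n; simpl; [reflexivity|]. rewrite IHn; reflexivity. Qed.

Lemma z_dpow z n : (z * dpow z n)%C = (RtoC (INR n) * Cpow z n)%C.
Proof. unfold dpow. destruct n; cbn [pred Cpow]. simpl INR. ring. ring. Qed.

Lemma z_dtrunc K (b : nat -> C) (z : C) : (z * dtrunc K b z)%C = ptrunc K (fun n => b n * RtoC (INR n))%C z.
Proof.
  unfold dtrunc, ptrunc. rewrite csum_scal. apply csum_ext; intros i _.
  replace (z * (dpow z i * b i))%C with ((z * dpow z i) * b i)%C by ring.
  rewrite z_dpow. ring.
Qed.

Lemma Cmod_Cpow_le (z : C) t n : Cmod z <= t -> Cmod (Cpow z n) <= t ^ n.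
Proof. intros H. rewrite Cmod_pow. apply pow_incr. split; [apply Cmod_ge_0|auto]. Qed.

Lemma pseries_limit_near (b : nat -> C) (z l c : C) (E : R) (M0 : nat) :
  @is_pseries C_AbsRing C_NormedModule b z l ->
  (forall M, (M0 <= M)%nat -> Cmod (ptrunc (S M) b z - c) <= E) ->
  Cmod (l - c) <= E.
Proof.
  intros Hs HM. apply (series_limit_near _ l c E M0 Hs). intros M HMM.
  rewrite (csum_ext _ _ (fun k => Cpow z k * b k)%C); [apply HM; auto|].
  intros i _. rewrite <- pow_n_Cpow. reflexivity.
Qed.

(* Convergence at ρ < 1 bounds |b_n| ρ^n; taking ρ = t/s² for s = (1+t)/2 this
   becomes a geometric decay |b_n| t^n ≤ B s^(2n), the form used below. *)
Lemma coeff_decay (b : nat -> C) (f : C -> C) :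
  (forall z, inD z -> @is_pseries C_AbsRing C_NormedModule b z (f z)) ->
  forall t, 0 < t < 1 -> exists B s, 0 <= B /\ 0 < s < 1 /\
    forall n, Cmod (b n) * t ^ n <= B * s ^ (2 * n).
Proof.
  intros Hp t Ht. set (s := (1 + t) / 2). assert (Hs : 0 < s < 1) by (unfold s; lra).
  assert (Hss : t < s * s) by (unfold s; nra).
  set (rho := t / (s * s)). assert (Hrho : 0 < rho < 1).
  { unfold rho. split. apply Rdiv_lt_0_compat; nra. apply (Rmult_lt_reg_r (s * s)); [nra|].
    unfold Rdiv. rewrite Rmult_assoc, Rinv_l by nra. lra. }
  assert (HD : inD (RtoC rho)) by (unfold inD; rewrite Cmod_R, Rabs_pos_eq; lra).
  destruct (series_terms_bounded _ _ (Hp _ HD)) as [B [HB HBn]].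
  exists B, s. repeat split; auto; try lra. intros n.
  specialize (HBn n). change (Cmod (mult (pow_n (K:=C_Ring) (RtoC rho) n) (b n)) <= B) in HBn.
  rewrite pow_n_Cpow in HBn. change (Cmod (Cpow (RtoC rho) n * b n)%C <= B) in HBn.
  rewrite Cmod_mult, Cmod_pow, Cmod_R, Rabs_pos_eq in HBn by lra.
  replace t with (rho * (s * s)) by (unfold rho; field; nra).
  rewrite Rpow_mult_distr, pow_mult. simpl (s ^ 2). rewrite Rmult_1_r.
  rewrite <- Rmult_assoc. apply Rmult_le_compat_r; [apply pow_le; nra|]. lra.
Qed.

Lemma Cpow_increment_bound (z h : C) t n : Cmod z <= t -> Cmod (z + h) <= t ->
  t * Cmod (Cpow (z + h) n - Cpow z n) <= INR n * Cmod h * t ^ n.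
Proof.
  intros Hz Hzh. assert (Ht : 0 <= t) by (pose proof (Cmod_ge_0 z); lra).
  induction n.
  - cbn [Cpow]. unfold Cminus; rewrite Cplus_opp_r, Cmod_0; simpl; lra.
  - replace (Cpow (z + h) (S n) - Cpow z (S n))%C with
      ((z + h) * (Cpow (z + h) n - Cpow z n) + h * Cpow z n)%C by (cbn [Cpow]; ring).
    pose proof (Cmod_triangle ((z + h) * (Cpow (z + h) n - Cpow z n)) (h * Cpow z n)) as T.
    rewrite !Cmod_mult in T. pose proof (Cmod_Cpow_le z t n Hz).
    pose proof (Cmod_ge_0 h). pose proof (Cmod_ge_0 (Cpow (z + h) n - Cpow z n)).
    pose proof (Cmod_ge_0 (z + h)). pose proof (Cmod_ge_0 (Cpow z n)).
    rewrite S_INR. simpl (t ^ S n).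
    assert (t * Cmod (z + h) * Cmod (Cpow (z + h) n - Cpow z n) <= t * (INR n * Cmod h * t ^ n)).
    { rewrite (Rmult_comm t), Rmult_assoc. apply Rmult_le_compat; nra. }
    assert (t * (Cmod h * Cmod (Cpow z n)) <= t * (Cmod h * t ^ n)).
    { apply Rmult_le_compat_l; auto. apply Rmult_le_compat_l; auto. }
    nra.
Qed.

Lemma dpow_bound (z : C) t n : Cmod z <= t ->
  t ^ 2 * Cmod (dpow z n) <= INR n * t ^ S n.
Proof.
  intros Hz. assert (Ht : 0 <= t) by (pose proof (Cmod_ge_0 z); lra).
  unfold dpow. rewrite Cmod_mult, Cmod_R, Rabs_pos_eq by apply pos_INR.
  destruct n. simpl INR. ring_simplify. lra.
  cbn [pred]. pose proof (Cmod_Cpow_le z t n Hz). pose proof (pos_INR (S n)).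
  replace (t ^ S (S n)) with (t ^ 2 * t ^ n) by (simpl; ring).
  assert (0 <= t ^ 2) by (apply pow_le; lra).
  replace (t ^ 2 * (INR (S n) * Cmod (Cpow z n)))
      with (INR (S n) * (t ^ 2 * Cmod (Cpow z n))) by ring.
  apply Rmult_le_compat_l; auto. apply Rmult_le_compat_l; auto.
Qed.

Lemma Cpow_taylor_bound (z h : C) t n : Cmod z <= t -> Cmod (z + h) <= t ->
  t ^ 2 * Cmod (Cpow (z + h) n - Cpow z n - h * dpow z n) <= INR n ^ 2 * Cmod h ^ 2 * t ^ n.
Proof.
  intros Hz Hzh. assert (Ht : 0 <= t) by (pose proof (Cmod_ge_0 z); lra).
  pose proof (Cmod_ge_0 h) as Hh.
  induction n.
  - unfold dpow. cbn [Cpow pred]. simpl INR.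
    replace (1 - 1 - h * (RtoC 0 * 1))%C with (RtoC 0) by ring. rewrite Cmod_0. simpl; nra.
  - set (En := (Cpow (z + h) n - Cpow z n - h * dpow z n)%C) in *.
    assert (Eq : (Cpow (z + h) (S n) - Cpow z (S n) - h * dpow z (S n))%C =
      ((z + h) * En + h * h * dpow z n)%C).
    { unfold En, dpow. cbn [Cpow pred]. rewrite S_INR, RtoC_plus.
      pose proof (z_dpow z n) as D. unfold dpow in D.
      transitivity ((z + h) * Cpow (z + h) n - z * Cpow z n - h * (RtoC (INR n) * Cpow z n)
         - h * Cpow z n)%C. ring. rewrite <- D. ring. }
    rewrite Eq. clear Eq.
    pose proof (Cmod_triangle ((z + h) * En) (h * h * dpow z n)) as T.
    rewrite !Cmod_mult in T. pose proof (Cmod_ge_0 En). pose proof (Cmod_ge_0 (z + h)).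
    pose proof (dpow_bound z t n Hz) as HD.
    pose proof (pos_INR n). rewrite S_INR. simpl (t ^ S n) in *.
    assert (A1 : t ^ 2 * (Cmod (z + h) * Cmod En) <= t * (INR n ^ 2 * Cmod h ^ 2 * t ^ n)).
    { replace (t ^ 2 * (Cmod (z + h) * Cmod En)) with (Cmod (z + h) * (t ^ 2 * Cmod En)) by ring.
      apply Rmult_le_compat; auto; nra. }
    assert (A2 : t ^ 2 * (Cmod h * Cmod h * Cmod (dpow z n)) <= Cmod h ^ 2 * (INR n * (t * t ^ n))).
    { replace (t ^ 2 * (Cmod h * Cmod h * Cmod (dpow z n)))
        with (Cmod h ^ 2 * (t ^ 2 * Cmod (dpow z n))) by ring.
      apply Rmult_le_compat_l; [nra|]. exact HD. }
    assert (0 <= t ^ n) by (apply pow_le; lra).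
    assert (0 <= INR n * Cmod h ^ 2 * (t * t ^ n)) by (apply Rmult_le_pos; nra).
    assert (0 <= Cmod h ^ 2 * (t * t ^ n)) by (apply Rmult_le_pos; nra).
    assert (t ^ 2 * Cmod ((z + h) * En + h * h * dpow z n)
            <= t ^ 2 * (Cmod (z + h) * Cmod En + Cmod h * Cmod h * Cmod (dpow z n))).
    { apply Rmult_le_compat_l; [nra|exact T]. }
    nra.
Qed.

Section Truncation.

Variables (b : nat -> C) (t B s : R).
Hypotheses (Ht : 0 < t < 1) (HB : 0 <= B) (Hs : 0 < s < 1).
Hypothesis Hdecay : forall n, Cmod (b n) * t ^ n <= B * s ^ (2 * n).

Lemma tail_bound K m :
  rsum m (fun k => Cmod (b (K + k)%nat) * t ^ (K + k)) <= B * s ^ K / (1 - s).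
Proof.
  apply Rle_trans with (rsum m (fun k => (B * s ^ K) * s ^ k)).
  - apply rsum_le. intros i _. eapply Rle_trans; [apply Hdecay|].
    rewrite Rmult_assoc, <- pow_add. apply Rmult_le_compat_l; auto. apply pow_antitone; [lra|lia].
  - rewrite rsum_scal. unfold Rdiv. apply Rmult_le_compat_l.
    apply Rmult_le_pos; auto; apply pow_le; lra. apply geom_sum_le; lra.
Qed.

Lemma tail_bound_weighted K m :
  rsum m (fun k => Cmod (b (K + k)%nat) * INR (K + k) * t ^ (K + k)) <= B * s ^ K / (1 - s) ^ 2.
Proof.
  apply Rle_trans with (rsum m (fun k => (B * s ^ K / (1 - s)) * s ^ k)).
  - apply rsum_le. intros i _. pose proof (Hdecay (K + i)%nat) as Hb. pose proof (pos_INR (K + i)).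
    pose proof (n_pow_le (K + i) s ltac:(lra)).
    replace (Cmod (b (K + i)%nat) * INR (K + i) * t ^ (K + i)) with
      (INR (K + i) * (Cmod (b (K + i)%nat) * t ^ (K + i))) by ring.
    eapply Rle_trans. apply Rmult_le_compat_l; [auto|exact Hb].
    replace (2 * (K + i))%nat with ((K + i) + (K + i))%nat by lia. rewrite pow_add.
    replace (B * s ^ K / (1 - s) * s ^ i) with (B * s ^ (K + i) * / (1 - s))
        by (rewrite pow_add; field; lra).
    replace (INR (K + i) * (B * (s ^ (K + i) * s ^ (K + i))))
      with (B * s ^ (K + i) * (INR (K + i) * s ^ (K + i))) by ring.
    apply Rmult_le_compat_l; auto. apply Rmult_le_pos; auto; apply pow_le; lra.
  - rewrite rsum_scal. replace (B * s ^ K / (1 - s) ^ 2)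
      with (B * s ^ K / (1 - s) * / (1 - s)) by (field; lra).
    apply Rmult_le_compat_l. unfold Rdiv. apply Rmult_le_pos.
        apply Rmult_le_pos; auto; apply pow_le; lra.
    apply Rlt_le, Rinv_0_lt_compat; lra. apply geom_sum_le; lra.
Qed.

Lemma Cmod_pterm_le (z : C) n : Cmod z <= t -> Cmod (Cpow z n * b n)%C <= Cmod (b n) * t ^ n.
Proof.
  intros Hz. rewrite Cmod_mult, Rmult_comm. apply Rmult_le_compat_l; [apply Cmod_ge_0|].
  apply Cmod_Cpow_le; auto.
Qed.

Lemma ptrunc_bound K (z : C) : Cmod z <= t -> Cmod (ptrunc K b z) <= B / (1 - s).
Proof.
  intros Hz. eapply Rle_trans; [apply Cmod_csum|].
  apply Rle_trans with (rsum K (fun k => B * s ^ k)).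
  - apply rsum_le; intros k _. eapply Rle_trans; [apply Cmod_pterm_le; auto|].
    eapply Rle_trans; [apply Hdecay|]. apply Rmult_le_compat_l; auto. apply pow_antitone; [lra|lia].
  - rewrite rsum_scal. apply Rmult_le_compat_l; auto. apply geom_sum_le; lra.
Qed.

Lemma ptrunc_error K (z l : C) : Cmod z <= t ->
  @is_pseries C_AbsRing C_NormedModule b z l -> Cmod (l - ptrunc K b z) <= B * s ^ K / (1 - s).
Proof.
  intros Hz Hl. apply (pseries_limit_near b z l (ptrunc K b z) _ K Hl). intros M HM.
  assert (E : ptrunc (S M) b z =
            (ptrunc K b z + csum (S M - K) (fun k => Cpow z (K + k) * b (K + k)%nat))%C).
  { unfold ptrunc. rewrite <- csum_split. f_equal. lia. }
  rewrite E. replace (ptrunc K b z + csum (S M - K) (fun k => Cpow z (K + k) * b (K + k)%nat)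
    - ptrunc K b z)%C with (csum (S M - K) (fun k => Cpow z (K + k) * b (K + k)%nat)%C) by ring.
  eapply Rle_trans; [apply Cmod_csum|]. eapply Rle_trans; [|apply (tail_bound K (S M - K))].
  apply rsum_le; intros i _. apply Cmod_pterm_le; auto.
Qed.

Lemma ptrunc_taylor_bound K (y z : C) : Cmod z <= t -> Cmod y <= t ->
  Cmod (ptrunc K b y - ptrunc K b z - (y - z) * dtrunc K b z)
  <= Cmod (y - z) ^ 2 * (rsum K (fun n => Cmod (b n) * INR n ^ 2 * t ^ n) / t ^ 2).
Proof.
  intros Hz Hy. set (h := (y - z)%C). assert (Ey : y = (z + h)%C) by (unfold h; ring).
  assert (Htp : 0 < t ^ 2) by (apply pow_lt; lra).
  unfold ptrunc, dtrunc. rewrite csum_scal, !csum_minus.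
  rewrite (csum_ext _ _ (fun n => (Cpow y n - Cpow z n - h * dpow z n) * b n)%C)
    by (intros; ring).
  eapply Rle_trans; [apply Cmod_csum|].
  apply Rle_trans with (rsum K (fun n => Cmod h ^ 2 / t ^ 2 * (Cmod (b n) * INR n ^ 2 * t ^ n)));
    [|right; rewrite rsum_scal; field; lra].
  apply rsum_le. intros i _. rewrite Cmod_mult. pose proof (Cmod_ge_0 (b i)).
  pose proof (Cpow_taylor_bound z h t i Hz ltac:(rewrite <- Ey; lra)) as E2. rewrite <- Ey in E2.
  assert (Cmod (Cpow y i - Cpow z i - h * dpow z i) <= INR i ^ 2 * Cmod h ^ 2 * t ^ i / t ^ 2).
  { apply (Rmult_le_reg_l (t ^ 2)); auto. unfold Rdiv.
    replace (t ^ 2 * (INR i ^ 2 * Cmod h ^ 2 * t ^ i * / t ^ 2))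
      with (INR i ^ 2 * Cmod h ^ 2 * t ^ i) by (field; lra). exact E2. }
  apply Rle_trans with (INR i ^ 2 * Cmod h ^ 2 * t ^ i / t ^ 2 * Cmod (b i)).
  - apply Rmult_le_compat_r; auto.
  - right. field. lra.
Qed.

Lemma tail_increment_bound K m (y z : C) : Cmod z <= t -> Cmod y <= t ->
  Cmod (csum m (fun k => (Cpow y (K + k) - Cpow z (K + k)) * b (K + k)%nat)%C)
  <= Cmod (y - z) * (B * s ^ K / (t * (1 - s) ^ 2)).
Proof.
  intros Hz Hy. set (h := (y - z)%C). assert (Ey : y = (z + h)%C) by (unfold h; ring).
  pose proof (Cmod_ge_0 h) as Hh.
  eapply Rle_trans; [apply Cmod_csum|].
  apply Rle_trans
    with (Cmod h / t * rsum m (fun k => Cmod (b (K + k)%nat) * INR (K + k) * t ^ (K + k))).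
  - rewrite <- rsum_scal. apply rsum_le. intros i _.
    rewrite Cmod_mult. pose proof (Cmod_ge_0 (b (K + i)%nat)).
    pose proof (Cpow_increment_bound z h t (K + i) Hz ltac:(rewrite <- Ey; lra)) as E1.
    rewrite <- Ey in E1.
    assert (Cmod (Cpow y (K + i) - Cpow z (K + i)) <= INR (K + i) * Cmod h * t ^ (K + i) / t).
    { apply (Rmult_le_reg_l t). lra. unfold Rdiv.
      replace (t * (INR (K + i) * Cmod h * t ^ (K + i) * / t))
        with (INR (K + i) * Cmod h * t ^ (K + i)) by (field; lra). exact E1. }
    apply Rle_trans with (INR (K + i) * Cmod h * t ^ (K + i) / t * Cmod (b (K + i)%nat)).
    + apply Rmult_le_compat_r; auto.
    + right. field. lra.
  - pose proof (tail_bound_weighted K m).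
    replace (Cmod h * (B * s ^ K / (t * (1 - s) ^ 2))) with (Cmod h / t * (B * s ^ K / (1 - s) ^ 2))
      by (field; split; lra).
    apply Rmult_le_compat_l; auto.
    apply Rmult_le_pos; [lra|apply Rlt_le, Rinv_0_lt_compat; lra].
Qed.

Variable f : C -> C.
Hypothesis Hp : forall z, inD z -> @is_pseries C_AbsRing C_NormedModule b z (f z).

Lemma increment_vs_truncated_derivative K (y z : C) : Cmod z <= t -> Cmod y <= t ->
  Cmod (f y - f z - (y - z) * dtrunc K b z)
  <= Cmod (y - z) ^ 2 * (rsum K (fun n => Cmod (b n) * INR n ^ 2 * t ^ n) / t ^ 2)
     + Cmod (y - z) * (B * s ^ K / (t * (1 - s) ^ 2)).
Proof.
  intros Hz Hy.
  assert (Hyd : inD y) by (unfold inD; lra). assert (Hzd : inD z) by (unfold inD; lra).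
  pose proof (is_series_minus _ _ _ _ (Hp y Hyd) (Hp z Hzd)) as HS.
  apply (series_limit_near _ (f y - f z)%C ((y - z) * dtrunc K b z)%C _ K HS). intros M HM.
  rewrite (csum_ext _ _ (fun n => Cpow y n * b n - Cpow z n * b n)%C)
    by (intros i _; rewrite <- !pow_n_Cpow; reflexivity).
  set (m := (S M - K)%nat).
  assert (E : csum (S M) (fun n => Cpow y n * b n - Cpow z n * b n)%C
              = (ptrunc K b y - ptrunc K b z
                 + csum m (fun k => (Cpow y (K + k) - Cpow z (K + k)) * b (K + k)%nat))%C).
  { assert (HSM : S M = (K + m)%nat) by (unfold m; lia).
    rewrite HSM, csum_split. unfold ptrunc. rewrite csum_minus.
    f_equal. apply csum_ext; intros; ring. }
  rewrite E.
  match goal with |- Cmod (?P + ?T - ?L) <= _ =>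
    replace (P + T - L)%C with ((P - L) + T)%C by ring end.
  eapply Rle_trans; [apply Cmod_triangle|].
  pose proof (ptrunc_taylor_bound K y z Hz Hy). pose proof (tail_increment_bound K m y z Hz Hy).
  lra.
Qed.

(* Hence f'(z) is approximated by the truncated derivative series, to within O(s^K):
   divide the previous estimate by a small real increment h and let h → 0. *)
Lemma derivative_vs_truncation K (z l : C) : Cmod z < t ->
  @is_derive C_AbsRing C_NormedModule f z l ->
  Cmod (l - dtrunc K b z) <= B * s ^ K / (t * (1 - s) ^ 2).
Proof.
  intros Hz Hder.
  set (tau := B * s ^ K / (t * (1 - s) ^ 2)).
  set (A := rsum K (fun n => Cmod (b n) * INR n ^ 2 * t ^ n) / t ^ 2).
  assert (HA : 0 <= A).
  { unfold A. apply Rmult_le_pos; [|apply Rlt_le, Rinv_0_lt_compat, pow_lt; lra].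
    apply rsum_nonneg; intros i _. pose proof (Cmod_ge_0 (b i)). pose proof (pos_INR i).
    assert (0 <= t ^ i) by (apply pow_le; lra). apply Rmult_le_pos; [|auto]. nra. }
  apply Rle_plus_epsilon; intros e He. set (eps := e / 2).
  assert (Heps : 0 < eps) by (unfold eps; lra).
  destruct Hder as [_ Hd]. specialize (Hd z (fun P H => H) (mkposreal eps Heps)).
  destruct (locally_le_locally_norm z _ Hd) as [delta Hdelta].
  destruct (small_step delta (t - Cmod z) A eps (cond_pos delta) ltac:(lra) HA Heps)
    as [h [Hh [Hhz HhA]]].
  set (y := (z + RtoC h)%C).
  assert (Hyz : (y - z)%C = RtoC h) by (unfold y; ring).
  assert (Hmh : Cmod (RtoC h) = h) by (rewrite Cmod_R, Rabs_pos_eq; lra).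
  assert (Hy : Cmod y <= t) by (unfold y; eapply Rle_trans; [apply Cmod_triangle|]; lra).
  assert (Dl : Cmod (f y - f z - RtoC h * l) <= eps * h).
  { assert (Q : Cmod (y - z) < delta -> Cmod (f y - f z - (y - z) * l) <= eps * Cmod (y - z)).
    { intros Hyd. apply (Hdelta y). apply C_NormedModule_mixin_compat1. exact Hyd. }
    rewrite Hyz, Hmh in Q. apply Q. lra. }
  assert (DK : Cmod (f y - f z - RtoC h * dtrunc K b z) <= h ^ 2 * A + h * tau).
  { pose proof (increment_vs_truncated_derivative K y z ltac:(lra) Hy) as I.
    rewrite Hyz, Hmh in I. exact I. }
  assert (h * Cmod (l - dtrunc K b z) <= h ^ 2 * A + h * tau + eps * h).
  { rewrite <- Hmh at 1. rewrite <- Cmod_mult.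
    replace (RtoC h * (l - dtrunc K b z))%C with
      ((f y - f z - RtoC h * dtrunc K b z) - (f y - f z - RtoC h * l))%C by ring.
    eapply Rle_trans; [apply Cmod_triangle|]. rewrite Cmod_opp. lra. }
  assert (Cmod (l - dtrunc K b z) <= h * A + tau + eps) by (apply (Rmult_le_reg_l h); [lra|nra]).
  unfold eps in *. lra.
Qed.

End Truncation.

Lemma Cpow_polar r x n :
  Cpow (r * cos x, r * sin x) n = (r ^ n * cos (INR n * x), r ^ n * sin (INR n * x)).
Proof.
  induction n.
  - simpl. rewrite Rmult_0_l, cos_0, sin_0. unfold RtoC. f_equal; ring.
  - cbn [Cpow]. rewrite IHn, S_INR. unfold Cmult; simpl.
    replace ((INR n + 1) * x) with (x + INR n * x) by ring. rewrite cos_plus, sin_plus.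
    f_equal; ring.
Qed.

Definition root_angle (K j : nat) : R := 2 * PI * INR j / INR K.
Definition root_point (K : nat) (r : R) (j : nat) : C :=
  (r * cos (root_angle K j), r * sin (root_angle K j)).

(* Σ_j e^(i d θ_j) = 0 for 0 < d < K.  With φ = 2πd/K, the products
   2 sin(φ/2) cos(jφ) and 2 sin(φ/2) sin(jφ) telescope, and sin(φ/2) ≠ 0. *)
Lemma root_sums_vanish K d : (0 < d)%nat -> (d < K)%nat ->
  rsum K (fun j => cos (INR d * root_angle K j)) = 0 /\
  rsum K (fun j => sin (INR d * root_angle K j)) = 0.
Proof.
  intros Hd HK. set (phi := INR d * (2 * PI / INR K)).
  assert (HKp : 0 < INR K) by (apply lt_0_INR; lia).
  assert (Ej : forall j, INR d * root_angle K j = INR j * phi)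
    by (intros j; unfold phi, root_angle; field; lra).
  assert (Hs : 0 < sin (phi / 2)).
  { apply sin_gt_0; unfold phi.
    - apply Rmult_lt_0_compat; [|lra]. apply Rmult_lt_0_compat. apply lt_0_INR; lia.
      apply Rdiv_lt_0_compat; [pose proof PI_RGT_0|]; lra.
    - replace (INR d * (2 * PI / INR K) / 2) with (PI * (INR d / INR K)) by (field; lra).
      rewrite <- (Rmult_1_r PI) at 2. apply Rmult_lt_compat_l. apply PI_RGT_0.
      apply (Rmult_lt_reg_r (INR K)); auto. unfold Rdiv. rewrite Rmult_assoc, Rinv_l by lra.
      rewrite Rmult_1_l, Rmult_1_r. apply lt_INR; auto. }
  assert (Hend : (INR K - / 2) * phi = (0 - / 2) * phi + 2 * INR d * PI)
    by (unfold phi; field; lra).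
  split.
  - set (g := fun j => sin ((INR j - / 2) * phi)).
    assert (E : rsum K (fun j => 2 * sin (phi / 2) * cos (INR d * root_angle K j))
               = rsum K (fun j => g (S j) - g j)).
    { apply rsum_ext; intros j _. unfold g. rewrite S_INR, Ej.
      replace ((INR j + 1 - / 2) * phi) with (INR j * phi + phi / 2) by field.
      replace ((INR j - / 2) * phi) with (INR j * phi - phi / 2) by field.
      rewrite sin_plus, sin_minus. ring. }
    rewrite rsum_telescope in E. unfold g in E. simpl INR in E.
    rewrite Hend, sin_period, Rminus_diag, rsum_scal in E.
    apply Rmult_integral in E. destruct E; [lra|auto].
  - set (g := fun j => cos ((INR j - / 2) * phi)).
    assert (E : rsum K (fun j => 2 * sin (phi / 2) * sin (INR d * root_angle K j))
               = - rsum K (fun j => g (S j) - g j)).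
    { rewrite <- (Rmult_1_l (rsum K (fun j => g (S j) - g j))), Ropp_mult_distr_l, <- rsum_scal.
      apply rsum_ext; intros j _. unfold g. rewrite S_INR, Ej.
      replace ((INR j + 1 - / 2) * phi) with (INR j * phi + phi / 2) by field.
      replace ((INR j - / 2) * phi) with (INR j * phi - phi / 2) by field.
      rewrite cos_plus, cos_minus. ring. }
    rewrite rsum_telescope in E. unfold g in E. simpl INR in E.
    rewrite Hend, cos_period, Rminus_diag, Ropp_0, rsum_scal in E.
    apply Rmult_integral in E. destruct E; [lra|auto].
Qed.

Lemma root_orthogonality K n m : (n < K)%nat -> (m < K)%nat ->
  rsum K (fun j => cos ((INR n - INR m) * root_angle K j)) = (if Nat.eq_dec n m then INR K else
      0) /\
  rsum K (fun j => sin ((INR n - INR m) * root_angle K j)) = 0.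
Proof.
  intros Hn Hm. destruct (Nat.eq_dec n m) as [->|Hnm].
  - rewrite (rsum_ext _ _ (fun _ => 1)) by (intros; rewrite Rminus_diag, Rmult_0_l, cos_0; auto).
    rewrite (rsum_ext K (fun j => sin _) (fun _ => 0))
      by (intros; rewrite Rminus_diag, Rmult_0_l, sin_0; auto).
    rewrite rsum_const, rsum_zero. split; ring.
  - destruct (proj1 (Nat.lt_gt_cases n m) Hnm) as [H|H].
    + destruct (root_sums_vanish K (m - n) ltac:(lia) ltac:(lia)) as [Hc Hs].
      rewrite minus_INR in Hc, Hs by lia. split.
      * rewrite <- Hc. apply rsum_ext; intros j _. rewrite <- cos_neg. f_equal. ring.
      * rewrite (rsum_ext _ _ (fun j => -1 * sin ((INR m - INR n) * root_angle K j))).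
        { rewrite rsum_scal, Hs. ring. }
        intros j _. replace (-1 * sin ((INR m - INR n) * root_angle K j))
          with (- sin ((INR m - INR n) * root_angle K j)) by ring.
        rewrite <- sin_neg. f_equal. ring.
    + destruct (root_sums_vanish K (n - m) ltac:(lia) ltac:(lia)) as [Hc Hs].
      rewrite minus_INR in Hc, Hs by lia. auto.
Qed.

Lemma discrete_parseval K r (c : nat -> C) : (0 < K)%nat ->
  rsum K (fun j => Cmod (ptrunc K c (root_point K r j)) ^ 2)
  = INR K * rsum K (fun n => Cmod (c n) ^ 2 * r ^ (2 * n)).
Proof.
  intros HK. unfold ptrunc.
  set (X := fun n j => r ^ n * cos (INR n * root_angle K j) * fst (c n)
                       - r ^ n * sin (INR n * root_angle K j) * snd (c n)).
  set (Y := fun n j => r ^ n * cos (INR n * root_angle K j) * snd (c n)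
                       + r ^ n * sin (INR n * root_angle K j) * fst (c n)).
  rewrite (rsum_ext _ _ (fun j => rsum K (fun n => rsum K (fun m => X n j * X m j + Y n j * Y m
      j)))).
  2:{ intros j _. rewrite Cmod2_alt. unfold Re, Im. rewrite csum_fst, csum_snd.
      rewrite (rsum_ext _ _ (fun n => X n j)), (rsum_ext K (fun i => snd _) (fun n => Y n j)).
      - simpl (_ ^ 2). rewrite !Rmult_1_r, !rsum_mul, <- rsum_plus.
        apply rsum_ext; intros. rewrite <- rsum_plus. reflexivity.
      - intros i _. unfold root_point, Y. rewrite Cpow_polar. destruct (c i); simpl; ring.
      - intros i _. unfold root_point, X. rewrite Cpow_polar. destruct (c i); simpl; ring. }
  rewrite rsum_swap, <- rsum_scal. apply rsum_ext; intros n Hn. rewrite rsum_swap.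
  rewrite (rsum_ext _ _ (fun m => if Nat.eq_dec n m then INR K * (Cmod (c n) ^ 2 * r ^ (2 * n))
      else 0)).
  { apply rsum_delta; auto. }
  intros m Hm.
  set (A := r ^ n * r ^ m * (fst (c n) * fst (c m) + snd (c n) * snd (c m))).
  set (Bc := r ^ n * r ^ m * (fst (c n) * snd (c m) - snd (c n) * fst (c m))).
  rewrite (rsum_ext _ _ (fun j => A * cos ((INR n - INR m) * root_angle K j)
                                 + Bc * sin ((INR n - INR m) * root_angle K j))).
  2:{ intros j _. unfold X, Y, A, Bc.
      replace ((INR n - INR m) * root_angle K j)
          with (INR n * root_angle K j - INR m * root_angle K j) by ring.
      rewrite cos_minus, sin_minus. ring. }
  rewrite rsum_plus, rsum_scal, rsum_scal. destruct (root_orthogonality K n m Hn Hm) as [Hc Hs].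
  rewrite Hc, Hs. destruct (Nat.eq_dec n m).
  - subst m. unfold A. rewrite Cmod2_alt. unfold Re, Im.
      replace (2 * n)%nat with (n + n)%nat by lia.
    rewrite pow_add. ring.
  - ring.
Qed.

(* Crude numerical bounds 2 < e < 3, from e^(-1/8) ≥ 7/8 and 1 + x ≤ e^x. *)
Lemma e_lt_3 : exp 1 < 3.
Proof.
  set (a := exp (1/8)).
  assert (Ha : a * exp (-(1/8)) = 1) by (unfold a; rewrite <- exp_plus, Rplus_opp_r, exp_0; auto).
  pose proof (exp_ineq1_le (-(1/8))). pose proof (exp_pos (1/8)). fold a in H0.
  assert (Ha8 : a <= 8/7) by nra.
  assert (E : exp 1 = ((a ^ 2) ^ 2) ^ 2).
  { unfold a. simpl. rewrite !Rmult_1_r, <- !exp_plus. f_equal. field. }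
  rewrite E, <- !pow_mult. simpl (2 * (2 * 2))%nat.
  apply Rle_lt_trans with ((8/7) ^ 8). apply pow_incr; lra. simpl. lra.
Qed.

Lemma e_gt_2 : 2 < exp 1.
Proof. pose proof (exp_ineq1 1 ltac:(lra)). lra. Qed.

(* 9 < α < 16: the weights n² - α are negative for n ≤ 3 and positive for n ≥ 4. *)
Lemma alpha_bounds : 9 < alpha < 16.
Proof. unfold alpha. pose proof e_lt_3. pose proof e_gt_2. simpl. nra. Qed.

Lemma weight_nonneg n (x : C) : (4 <= n)%nat -> 0 <= (INR n ^ 2 - alpha) * Cmod x ^ 2.
Proof.
  intros Hn. apply Rmult_le_pos; [|apply pow2_ge_0]. pose proof alpha_bounds.
  assert (4 <= INR n) by (replace 4 with (INR 4) by (simpl; ring); apply le_INR; auto). nra.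
Qed.

Lemma Cmod_polar a x : 0 <= a -> Cmod (a * cos x, a * sin x) = a.
Proof.
  intros Ha. unfold Cmod. cbn [fst snd].
  replace ((a * cos x) ^ 2 + (a * sin x) ^ 2) with (a ^ 2 * (Rsqr (sin x) + Rsqr (cos x)))
    by (unfold Rsqr; ring).
  rewrite sin2_cos2, Rmult_1_r. apply sqrt_pow2; auto.
Qed.

(* |℘(u)| ≤ 1 + |u| e^(Re u) ≤ 1 + e on the unit disk. *)
Lemma wp_bound u : Cmod u < 1 -> Cmod (wp u) <= 1 + exp 1.
Proof.
  intros Hu. unfold wp. eapply Rle_trans; [apply Cmod_triangle|]. rewrite Cmod_1, Cmod_mult.
  unfold Cexp. rewrite Cmod_polar by (apply Rlt_le, exp_pos).
  pose proof (re_le_Cmod u) as Hre. unfold Re in Hre. pose proof (Rle_abs (fst u)).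
  assert (exp (fst u) <= exp 1) by (apply Rlt_le, exp_increasing; lra).
  pose proof (Cmod_ge_0 u). pose proof (exp_pos (fst u)).
  assert (Cmod u * exp (fst u) <= 1 * exp 1) by (apply Rmult_le_compat; lra). lra.
Qed.

(* The analytic content of f ∈ S*_℘: z f'(z) = ℘(ω(z)) f(z) with |ω(z)| < 1,
   hence |z f'(z)| ≤ (1 + e) |f(z)| throughout the disk. *)
Lemma Sstar_wp_radial_estimate (f : C -> C) : Sstar_wp f ->
  exists f' : C -> C,
    (forall z, inD z -> @is_derive C_AbsRing C_NormedModule f z (f' z)) /\
    (forall z, inD z -> z <> 0%C -> Cmod (z * f' z) <= (1 + exp 1) * Cmod (f z)).
Proof.
  intros [_ [Hnz [f' [Hder [w [_ [_ [HwD Hw]]]]]]]].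
  exists f'. split; auto. intros z Hz Hz0.
  specialize (Hw z Hz). destruct (Ceq_dec z 0) as [E|_]; [contradiction|].
  assert (E : (z * f' z)%C = (wp (w z) * f z)%C).
  { rewrite <- Hw. field. apply (Hnz z Hz Hz0). }
  rewrite E, Cmod_mult. apply Rmult_le_compat_r; [apply Cmod_ge_0|].
  apply wp_bound, (HwD z Hz).
Qed.

Lemma Sstar_wp_b0 (f : C -> C) (b : nat -> C) : Sstar_wp f ->
  (forall z, inD z -> @is_pseries C_AbsRing C_NormedModule b z (f z)) -> b O = 0%C.
Proof.
  intros [[_ [Hf0 _]] _] Hp.
  assert (H0D : inD 0%C) by (unfold inD; rewrite Cmod_0; lra).
  assert (H : Cmod (f 0%C - b O) <= 0).
  { apply (pseries_limit_near b 0%C (f 0%C) (b O) 0 O (Hp _ H0D)). intros M _.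
    assert (E : ptrunc (S M) b 0%C = b O).
    { unfold ptrunc. induction M. simpl. ring. cbn [csum] in *. rewrite IHM. cbn [Cpow]. ring. }
    rewrite E. unfold Cminus. rewrite Cplus_opp_r, Cmod_0. lra. }
  pose proof (Cmod_ge_0 (f 0%C - b O)).
  assert (E : (f 0%C - b O)%C = 0%C) by (apply Cmod_eq_0; lra).
  rewrite Hf0 in E. replace (b O) with (- (0 - b O))%C by ring. rewrite E. ring.
Qed.

Lemma dtrunc_at_0 (b : nat -> C) K : (2 <= K)%nat -> dtrunc K b 0%C = b 1%nat.
Proof.
  intros HK. induction K as [|K IH]; [lia|].
  destruct (Nat.eq_dec K 1) as [->|HK1].
  - unfold dtrunc, dpow. cbn [csum pred Cpow]. simpl INR. ring.
  - unfold dtrunc in *. cbn [csum]. rewrite IH by lia. unfold dpow. destruct K as [|K]; [lia|].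
    cbn [pred]. destruct K; [lia|]. cbn [Cpow]. ring.
Qed.

(* b_1 = f'(0) = 1, since f'(0) is the limit of the truncated derivatives at 0. *)
Lemma Sstar_wp_b1 (f : C -> C) (b : nat -> C) : Sstar_wp f ->
  (forall z, inD z -> @is_pseries C_AbsRing C_NormedModule b z (f z)) -> b 1%nat = 1%C.
Proof.
  intros [[_ [_ Hd1]] _] Hp.
  destruct (coeff_decay b f Hp (1/2) ltac:(lra)) as [B [s [HB [Hs Hb]]]].
  assert (H : Cmod (1 - b 1%nat) <= 0).
  { apply Rle_plus_epsilon; intros e He. rewrite Rplus_0_l.
    set (Q := B / (1/2 * (1 - s) ^ 2)).
    assert (HQ : 0 <= Q).
    { apply Rmult_le_pos; [lra|]. apply Rlt_le, Rinv_0_lt_compat, Rmult_lt_0_compat; [lra|].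
      apply pow_lt; lra. }
    destruct (geometric_small s Q e Hs HQ He 2) as [K [HK HKe]].
    pose proof (derivative_vs_truncation b (1/2) B s ltac:(lra) HB Hs Hb f Hp K 0%C (RtoC 1)
                  ltac:(rewrite Cmod_0; lra) Hd1) as D.
    rewrite dtrunc_at_0 in D by auto.
    replace (B * s ^ K / (1 / 2 * (1 - s) ^ 2)) with (Q * s ^ K) in D by (unfold Q; field; lra).
    lra. }
  pose proof (Cmod_ge_0 (1 - b 1%nat)).
  assert (E : (1 - b 1%nat)%C = 0%C) by (apply Cmod_eq_0; lra).
  replace (b 1%nat) with (1 - (1 - b 1%nat))%C by ring. rewrite E. ring.
Qed.

Section AreaInequality.

Variables (f : C -> C) (b : nat -> C).
Hypothesis Hf : Sstar_wp f.
Hypothesis Hp : forall z, inD z -> @is_pseries C_AbsRing C_NormedModule b z (f z).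

Lemma truncated_radial_estimate t B s K (z : C) :
  0 < t < 1 -> 0 <= B -> 0 < s < 1 -> (forall n, Cmod (b n) * t ^ n <= B * s ^ (2 * n)) ->
  0 < Cmod z < t ->
  Cmod (ptrunc K (fun n => b n * RtoC (INR n))%C z)
  <= (1 + exp 1) * Cmod (ptrunc K b z)
     + (2 + exp 1) * (B * s ^ K / (t * (1 - s) ^ 2) + B * s ^ K / (1 - s)).
Proof.
  intros Ht HB Hs Hb Hz.
  destruct (Sstar_wp_radial_estimate f Hf) as [f' [Hder Hrad]].
  assert (HzD : inD z) by (unfold inD; lra).
  assert (Hz0 : z <> 0%C) by (intros E; rewrite E, Cmod_0 in Hz; lra).
  pose proof (derivative_vs_truncation b t B s Ht HB Hs Hb f Hp K z (f' z) ltac:(lra) (Hder z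
      HzD)) as Hd.
  pose proof (ptrunc_error b t B s HB Hs Hb K z (f z) ltac:(lra) (Hp z HzD)) as HF.
  set (tau := B * s ^ K / (t * (1 - s) ^ 2)) in *. set (T := B * s ^ K / (1 - s)) in *.
  assert (HG : Cmod (z * f' z - ptrunc K (fun n => b n * RtoC (INR n))%C z) <= tau).
  { rewrite <- z_dtrunc.
      replace (z * f' z - z * dtrunc K b z)%C with (z * (f' z - dtrunc K b z))%C by ring.
    rewrite Cmod_mult. pose proof (Cmod_ge_0 (f' z - dtrunc K b z)). nra. }
  assert (HG' : Cmod (ptrunc K (fun n => b n * RtoC (INR n))%C z) <= Cmod (z * f' z) + tau).
  { match goal with |- Cmod ?G <= _ => replace G with (z * f' z - (z * f' z - G))%C by ring end.
    eapply Rle_trans; [apply Cmod_triangle|]. rewrite Cmod_opp. lra. }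
  assert (HF' : Cmod (f z) <= Cmod (ptrunc K b z) + T).
  { replace (f z) with (ptrunc K b z + (f z - ptrunc K b z))%C by ring.
    eapply Rle_trans; [apply Cmod_triangle|]. lra. }
  pose proof (Hrad z HzD Hz0). pose proof e_gt_2.
  assert (0 <= tau) by (pose proof (Cmod_ge_0 (f' z - dtrunc K b z)); lra).
  assert (0 <= T) by (pose proof (Cmod_ge_0 (f z - ptrunc K b z)); lra).
  assert ((1 + exp 1) * Cmod (f z) <= (1 + exp 1) * (Cmod (ptrunc K b z) + T))
    by (apply Rmult_le_compat_l; lra).
  assert (0 <= (1 + exp 1) * tau) by (apply Rmult_le_pos; lra).
  nra.
Qed.

(* Truncated area inequality: averaging the squares of the previous estimate over
   the points r e^(2πij/K) and applying [discrete_parseval] to both sides gives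
   Σ_{n<K} (n² - α) |b_n|² r^(2n) ≤ 2 c d S + d², where c = 1 + e, S bounds the
   truncations of f and d is the truncation error; d = O(s^K). *)
Lemma truncated_area_inequality r t B s K :
  0 < r < t -> t < 1 -> 0 <= B -> 0 < s < 1 ->
  (forall n, Cmod (b n) * t ^ n <= B * s ^ (2 * n)) -> (0 < K)%nat ->
  let d := (2 + exp 1) * (B * s ^ K / (t * (1 - s) ^ 2) + B * s ^ K / (1 - s)) in
  rsum K (fun n => (INR n ^ 2 - alpha) * Cmod (b n) ^ 2 * r ^ (2 * n))
  <= 2 * (1 + exp 1) * d * (B / (1 - s)) + d ^ 2.
Proof.
  intros Hr Ht1 HB Hs Hb HK d.
  set (c := 1 + exp 1). pose proof e_gt_2.
  set (E := 2 * c * d * (B / (1 - s)) + d ^ 2).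
  assert (Hd : 0 <= d).
  { unfold d. apply Rmult_le_pos; [lra|]. apply Rplus_le_le_0_compat; apply Rmult_le_pos;
      try (apply Rmult_le_pos; [lra|apply pow_le; lra]); apply Rlt_le, Rinv_0_lt_compat.
    apply Rmult_lt_0_compat; [lra|apply pow_lt; lra]. lra. }
  assert (Hpt : forall j, Cmod (ptrunc K (fun n => b n * RtoC (INR n))%C (root_point K r j)) ^ 2
                          <= alpha * Cmod (ptrunc K b (root_point K r j)) ^ 2 + E).
  { intros j. assert (Hz : Cmod (root_point K r j) = r) by (apply Cmod_polar; lra).
    unfold alpha, E. fold c. apply perturbed_square_le; [unfold c; lra|exact Hd| |].
    - split; [apply Cmod_ge_0|]. apply (ptrunc_bound b t B s); try lra; auto.
    - split; [apply Cmod_ge_0|]. apply (truncated_radial_estimate t B s); auto; lra. }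
  assert (Hsum : rsum K (fun j => Cmod (ptrunc K (fun n => b n * RtoC (INR n))%C (root_point K
      r j)) ^ 2)
                 <= alpha * rsum K (fun j => Cmod (ptrunc K b (root_point K r j)) ^ 2) + INR K * E).
  { rewrite <- rsum_scal, <- rsum_const, <- rsum_plus. apply rsum_le; intros; apply Hpt. }
  rewrite !discrete_parseval in Hsum by auto.
  assert (HKp : 0 < INR K) by (apply lt_0_INR; lia).
  rewrite (rsum_ext _ _ (fun n => Cmod (b n * RtoC (INR n))%C ^ 2 * r ^ (2 * n)
                                 + (- alpha) * (Cmod (b n) ^ 2 * r ^ (2 * n)))).
  2:{ intros i _. rewrite Cmod_mult, Cmod_R, Rabs_pos_eq by apply pos_INR. ring. }
  rewrite rsum_plus, rsum_scal. apply (Rmult_le_reg_l (INR K)); auto. fold E. nra.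
Qed.

(* Letting K → ∞ in [truncated_area_inequality]: all terms with n ≥ 4 have
   nonnegative weight, so every initial segment of Σ (n² - α)|b_n|² r^(2n) is ≤ 0. *)
Lemma area_inequality r L : 0 < r < 1 -> (4 <= L)%nat ->
  rsum L (fun n => (INR n ^ 2 - alpha) * Cmod (b n) ^ 2 * r ^ (2 * n)) <= 0.
Proof.
  intros Hr HL. set (t := (1 + r) / 2).
  destruct (coeff_decay b f Hp t ltac:(unfold t; lra)) as [B [s [HB [Hs Hb]]]].
  pose proof e_gt_2.
  assert (HinvP : forall x, 0 < x -> 0 <= B / x)
      by (intros; apply Rmult_le_pos; [lra|apply Rlt_le, Rinv_0_lt_compat; auto]).
  set (D := (2 + exp 1) * (B / (t * (1 - s) ^ 2) + B / (1 - s))).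
  assert (HD : 0 <= D).
  { apply Rmult_le_pos; [lra|]. apply Rplus_le_le_0_compat; apply HinvP; [|lra].
    apply Rmult_lt_0_compat; [unfold t; lra|apply pow_lt; lra]. }
  set (S := B / (1 - s)). assert (HS : 0 <= S) by (apply HinvP; lra).
  set (Q := 2 * (1 + exp 1) * D * S + D ^ 2).
  assert (HQ : 0 <= Q) by (unfold Q; assert (0 <= D * S) by (apply Rmult_le_pos; auto); nra).
  apply Rle_plus_epsilon; intros e He. rewrite Rplus_0_l.
  destruct (geometric_small s Q e Hs HQ He L) as [K [HLK HK]].
  pose proof (truncated_area_inequality r t B s K ltac:(unfold t; lra) ltac:(unfold t; lra) HB Hs Hb
                ltac:(lia)) as HA. cbv zeta in HA.
  replace ((2 + exp 1) * (B * s ^ K / (t * (1 - s) ^ 2) + B * s ^ K / (1 - s)))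
      with (D * s ^ K) in HA
    by (unfold D; field; split; [lra|unfold t; lra]).
  assert (HsK : 0 <= s ^ K <= 1) by (split; [apply pow_le; lra|apply pow_le_one; lra]).
  assert (Herr : 2 * (1 + exp 1) * (D * s ^ K) * S + (D * s ^ K) ^ 2 <= Q * s ^ K).
  { unfold Q. assert (0 <= D ^ 2 * s ^ K * (1 - s ^ K)) by (apply Rmult_le_pos; nra). nra. }
  set (F := fun n => (INR n ^ 2 - alpha) * Cmod (b n) ^ 2 * r ^ (2 * n)) in HA |- *.
  pose proof (rsum_split L (K - L) F) as Hsplit. replace (L + (K - L))%nat with K in Hsplit by lia.
  assert (0 <= rsum (K - L) (fun k => F (L + k)%nat)).
  { apply rsum_nonneg; intros i _.
      apply Rmult_le_pos; [apply weight_nonneg; lia|apply pow_le; lra]. }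
  fold S in HA. lra.
Qed.

(* The weighted sum Σ_{2 ≤ n < N+2} (n² - α)|b_n|² is at most α - 1: split off
   b_0 = 0 and b_1 = 1 in [area_inequality], then let r → 1. *)
Lemma partial_sum_bound N : (2 <= N)%nat ->
  rsum N (fun k => (INR (k + 2) ^ 2 - alpha) * Cmod (b (k + 2)%nat) ^ 2) <= alpha - 1.
Proof.
  intros HN. apply (finite_sum_radial_limit N _ (fun k => 2 * (k + 2))%nat). intros r Hr.
  set (F := fun n => (INR n ^ 2 - alpha) * Cmod (b n) ^ 2 * r ^ (2 * n)).
  pose proof (area_inequality r (2 + N) Hr ltac:(lia)) as HA. fold F in HA.
  rewrite rsum_split in HA.
  assert (Hhead : rsum 2 F = (1 - alpha) * r ^ 2).
  { unfold F. cbn [rsum]. rewrite (Sstar_wp_b0 f b Hf Hp), (Sstar_wp_b1 f b Hf Hp), Cmod_0, Cmod_1.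
    simpl. ring. }
  rewrite (rsum_ext N _ (fun k => F (2 + k)%nat))
      by (intros i _; unfold F; rewrite (Nat.add_comm i 2); reflexivity).
  pose proof alpha_bounds. assert (r ^ 2 <= 1) by (apply pow_le_one; lra). nra.
Qed.

(* If moreover b_2 = b_3 = 0, every weighted term is nonnegative, so each single
   term (k² - α)|b_k|² (k ≥ 4) is bounded by α - 1. *)
Lemma coefficient_bound k : b 2%nat = 0%C -> b 3%nat = 0%C -> (4 <= k)%nat ->
  Cmod (b k) <= sqrt ((alpha - 1) / (INR k ^ 2 - alpha)).
Proof.
  intros H2 H3 Hk.
  set (u := fun n => (INR (n + 2) ^ 2 - alpha) * Cmod (b (n + 2)%nat) ^ 2).
  assert (Hnn : forall i, (i < S (k - 2))%nat -> 0 <= u i).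
  { intros i _. unfold u. destruct i as [|[|i]].
    - simpl (0 + 2)%nat. rewrite H2, Cmod_0. simpl; lra.
    - simpl (1 + 2)%nat. rewrite H3, Cmod_0. simpl; lra.
    - apply weight_nonneg; lia. }
  pose proof (rsum_term_le (S (k - 2)) u (k - 2) Hnn ltac:(lia)) as T.
  pose proof (partial_sum_bound (S (k - 2)) ltac:(lia)) as P. fold u in P.
  unfold u at 1 in T. replace (k - 2 + 2)%nat with k in T by lia.
  assert (Hk4 : 4 <= INR k) by (replace 4 with (INR 4) by (simpl; ring); apply le_INR; auto).
  pose proof alpha_bounds. assert (Hden : 0 < INR k ^ 2 - alpha) by nra.
  rewrite <- (sqrt_pow2 (Cmod (b k))) by apply Cmod_ge_0. apply sqrt_le_1_alt.
  apply (Rmult_le_reg_l (INR k ^ 2 - alpha)); auto.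
  replace ((INR k ^ 2 - alpha) * ((alpha - 1) / (INR k ^ 2 - alpha))) with (alpha - 1)
      by (field; lra).
  lra.
Qed.

End AreaInequality.

Theorem mainTheorem13 :
  (forall (f : C -> C) (b : nat -> C),
     Sstar_wp f ->
     (forall z, inD z -> @is_pseries C_AbsRing C_NormedModule b z (f z)) ->
     ex_series (fun n => (INR (n + 2) ^ 2 - alpha) * Cmod (b (n + 2)%nat) ^ 2) /\
     Series (fun n => (INR (n + 2) ^ 2 - alpha) * Cmod (b (n + 2)%nat) ^ 2)
       <= alpha - 1)
  /\
  (forall (f : C -> C) (b : nat -> C),
     Sstar_wp f ->
     (forall z, inD z -> @is_pseries C_AbsRing C_NormedModule b z (f z)) ->
     b 2%nat = 0%C -> b 3%nat = 0%C ->
     forall k : nat, (4 <= k)%nat ->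
       Cmod (b k) <= sqrt ((alpha - 1) / (INR k ^ 2 - alpha))).
Proof.
  split.
  - intros f b Hf Hp. apply (series_eventually_nonneg_bounded _ 2).
    + intros k. apply weight_nonneg. lia.
    + apply (partial_sum_bound f b Hf Hp).
  - intros f b Hf Hp H2 H3 k Hk. exact (coefficient_bound f b Hf Hp k H2 H3 Hk).
Qed.
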